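(* Let $(\Omega,\{\Omega_m\}_{m\ge1},\rho,\mu)$ be a locally homogeneous space and fix $n\ge1$. Let $\Delta_{n+1}=\{Q^k_\alpha\}$ be the family of dyadic cubes subordinated to $\Omega_{n+1}$, with constants $a_0,c_0,c_1,c_2,\delta$, as described in the context. Then for every positive integer $k$ large enough, the set $\Omega_n$ is covered, up to a set of $\mu$-measure zero, by a finite union of dyadic cubes $Q^k_\alpha\in\Delta_{n+1}$ of generation $k$ with the following properties: (i) $Q^k_\alpha\subset B(z^k_\alpha,c_1\delta^k)\subset\Omega_{n+1}$; (ii) there is a set $F^k_\alpha$ which is a finite union of dyadic cubes $Q^k_{\beta}\in\Delta_{n+1}$ of generation $k$, such that $B(z^k_\alpha,c_1\delta^k)\subset F^k_\alpha$ up to a set of measure zero and $F^k_\alpha\subset B(z^k_\alpha,c'\delta^k)\subset\Omega_{n+1}$ (for a constant $c'$ independent of $k$); moreover $F^k_\alpha$ is a space of homogeneous type, i.e. there is a constant $c$ with $\mu(B(x,2r)\cap F^k_\alpha)\le c\,\mu(B(x,r)\cap F^k_\alpha)$ for a.e. $x\in F^k_\alpha$ and all $r>0$.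
   Context: A locally homogeneous space $(\Omega,\{\Omega_m\},\rho,\mu)$ consists of: a set $\Omega$ and $\rho:\Omega\times\Omega\to[0,\infty)$ with $\rho(x,y)=0\iff x=y$ and $\rho(x,y)=\rho(y,x)$; balls $B(x,r)=\{y\in\Omega:\rho(x,y)<r\}$; the topology in which $A$ is open iff every $x\in A$ has some $B(x,r)\subset A$; a set is bounded if contained in some ball; it is assumed that the balls are open and the closure of $B(x,r)$ is contained in $\{y:\rho(x,y)\le r\}$ (equivalently, $\rho(\cdot,y)$ is continuous for each $y$); $\mu$ is a positive regular Borel measure on $\Omega$; $\{\Omega_m\}_{m\ge1}$ is an increasing sequence of bounded measurable sets with $\bigcup_m\Omega_m=\Omega$ such that for every $m$: the closure of $\Omega_m$ is compact; there is $\varepsilon_m>0$ with $\{x\in\Omega:\rho(x,y)<2\varepsilon_m\text{ for some }y\in\Omega_m\}\subset\Omega_{m+1}$; there is $B_m\ge1$ with $\rho(x,y)\le B_m(\rho(x,z)+\rho(z,y))$ for all $x,y,z\in\Omega_m$; there is $C_m>1$ with $0<\mu(B(x,2r))\le C_m\mu(B(x,r))<\infty$ for all $x\in\Omega_m$, $0<r\le\varepsilon_m$. Dyadic cubes (construction of Bramanti–Zhu): for each $N$ there is a collection $\Delta_N=\{Q^k_\alpha:k=1,2,\dots,\alpha\in I_k\}$ of open sets (''dyadic cubes subordinated to $\Omega_N$'', $Q^k_\alpha$ of generation $k$), constants $a_0,c_0,c_1,c_2>0$, $\delta\in(0,1)$ with $c_1\delta<2\varepsilon_{N+1}$, and a set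 $E\subset\Omega_N$ with $\mu(E)=0$, such that for every $k\ge1$: (a) each $Q^k_\alpha$ contains a ball $B(z^k_\alpha,a_0\delta^k)$; (b) $\bigcup_\alpha Q^k_\alpha\subset\Omega_{N+1}$; (c) for $1\le l\le k$ there is $Q^l_\beta\supseteq Q^k_\alpha$; (d) $\mathrm{diam}(Q^k_\alpha)<c_1\delta^k$ and $\overline{Q^k_\alpha}\subset B(z^k_\alpha,c_1\delta^k)\subset\Omega_{N+2}$; (e) if $l\ge k$ then either $Q^l_\beta\subset Q^k_\alpha$ or $Q^l_\beta\cap Q^k_\alpha=\emptyset$; (f) $\Omega_N\setminus\bigcup_\alpha Q^k_\alpha\subset E$; (g) for $x\in Q^k_\alpha\setminus E$ and $j\ge1$ there is $Q^j_\beta\ni x$; (h) $\mu(B(x,2r)\cap Q^k_\alpha)\le c_2\,\mu(B(x,r)\cap Q^k_\alpha)$ for $x\in Q^k_\alpha\setminus E$, $r>0$; more precisely $\mu(B(x,r)\cap Q^k_\alpha)\ge c_0\mu(B(x,r))$ for $r\le\delta^k$ and $\ge c_0\mu(Q^k_\alpha)$ for $r>\delta^k$. *)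

From HB Require Import structures.
From mathcomp Require Import all_boot all_order all_algebra.
From mathcomp Require Import all_classical all_reals all_analysis.
Set Implicit Arguments. Unset Strict Implicit. Unset Printing Implicit Defensive.
Import Order.TTheory GRing.Theory Num.Theory.
Local Open Scope classical_set_scope.
Local Open Scope ring_scope.

Section QuasiMetric.
Context {R : realType} {T : Type} (rho : T -> T -> R).

Definition rball (x : T) (r : R) : set T := [set y | rho x y < r].

Definition rho_open (A : set T) : Prop :=
  forall x, A x -> exists r : R, 0 < r /\ rball x r `<=` A.

Definition rho_closure (A : set T) : set T :=
  [set x | forall U, rho_open U -> U x -> U `&` A !=set0].

Definition rho_compact (K : set T) : Prop :=
  forall (I : Type) (U : I -> set T), (forall i, rho_open (U i)) ->
    K `<=` \bigcup_i U i ->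
    exists F : set I, finite_set F /\ K `<=` \bigcup_(i in F) U i.

Definition rho_bounded (A : set T) : Prop :=
  exists x r, A `<=` rball x r.

Definition rho_diam (A : set T) : \bar R :=
  ereal_sup [set e | exists x y, A x /\ A y /\ e = (rho x y)%:E].

End QuasiMetric.

(** A locally homogeneous space (Omega, {Omega_m}_{m>=1}, rho, mu); the
    numbers eps_m of the definition are named explicitly as [eps m]. *)
Record locally_homogeneous (d : measure_display) (T : measurableType d)
    (R : realType) (rho : T -> T -> R) (mu : {measure set T -> \bar R})
    (Om : nat -> set T) (eps : nat -> R) : Prop := {
  lh_rho_ge0 : forall x y, 0 <= rho x y;
  lh_rho_eq0 : forall x y, rho x y = 0 <-> x = y;
  lh_rho_sym : forall x y, rho x y = rho y x;
  lh_ball_open : forall x r, rho_open rho (rball rho x r);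
  lh_closure_ball : forall x r,
      rho_closure rho (rball rho x r) `<=` [set y | rho x y <= r];
  lh_borel : @measurable d T = <<s rho_open rho >>;
  lh_outer_regular : forall A, measurable A ->
      mu A = ereal_inf [set mu U | U in [set U | rho_open rho U /\ A `<=` U]];
  lh_inner_regular : forall A, measurable A ->
      mu A = ereal_sup [set mu K | K in
                         [set K | measurable K /\ rho_compact rho K /\ K `<=` A]];
  lh_Om_meas : forall m, (0 < m)%N -> measurable (Om m);
  lh_Om_bounded : forall m, (0 < m)%N -> rho_bounded rho (Om m);
  lh_Om_incr : forall m, (0 < m)%N -> Om m `<=` Om m.+1;
  lh_Om_cover : \bigcup_(m in [set m | (0 < m)%N]) Om m = setT;
  lh_Om_compact : forall m, (0 < m)%N -> rho_compact rho (rho_closure rho (Om m));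
  lh_eps_pos : forall m, (0 < m)%N -> 0 < eps m;
  lh_eps_nbhd : forall m, (0 < m)%N ->
      [set x | exists y, Om m y /\ rho x y < 2 * eps m] `<=` Om m.+1;
  lh_quasi_triangle : forall m, (0 < m)%N -> exists B : R, 1 <= B /\
      forall x y z, Om m x -> Om m y -> Om m z ->
        rho x y <= B * (rho x z + rho z y);
  lh_doubling : forall m, (0 < m)%N -> exists C : R, 1 < C /\
      forall x r, Om m x -> 0 < r -> r <= eps m ->
        [/\ (0 < mu (rball rho x (2 * r)))%E,
            (mu (rball rho x (2 * r)) <= C%:E * mu (rball rho x r))%E &
            (mu (rball rho x r) < +oo)%E ]
}.

(** The dyadic cubes Delta_N = {Q k a : k >= 1, a : I k} subordinated to
    Omega_N (Bramanti--Zhu), with centers [z k a], constants a0 c0 c1 c2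
    delta and exceptional null set E, satisfying properties (a)--(h). *)
Record dyadic_cubes (d : measure_display) (T : measurableType d)
    (R : realType) (rho : T -> T -> R) (mu : {measure set T -> \bar R})
    (Om : nat -> set T) (eps : nat -> R) (N : nat)
    (I : nat -> Type) (Q : forall k, I k -> set T) (z : forall k, I k -> T)
    (a0 c0 c1 c2 delta : R) (E : set T) : Prop := {
  dc_a0 : 0 < a0; dc_c0 : 0 < c0; dc_c1 : 0 < c1; dc_c2 : 0 < c2;
  dc_delta : 0 < delta < 1;
  dc_c1delta : c1 * delta < 2 * eps N.+1;
  dc_E_sub : E `<=` Om N;
  dc_E_meas : measurable E;
  dc_E_null : mu E = 0%E;
  dc_open : forall k (a : I k), (0 < k)%N -> rho_open rho (Q k a);
  dc_a : forall k (a : I k), (0 < k)%N ->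
      rball rho (z k a) (a0 * delta ^+ k) `<=` Q k a;
  dc_b : forall k (a : I k), (0 < k)%N -> Q k a `<=` Om N.+1;
  dc_c : forall k l (a : I k), (0 < l)%N -> (l <= k)%N ->
      exists b : I l, Q k a `<=` Q l b;
  dc_d : forall k (a : I k), (0 < k)%N ->
      [/\ (rho_diam rho (Q k a) < (c1 * delta ^+ k)%:E)%E,
          rho_closure rho (Q k a) `<=` rball rho (z k a) (c1 * delta ^+ k) &
          rball rho (z k a) (c1 * delta ^+ k) `<=` Om N.+2];
  dc_e : forall k l (a : I k) (b : I l), (0 < k)%N -> (k <= l)%N ->
      Q l b `<=` Q k a \/ Q l b `&` Q k a = set0;
  dc_f : forall k, (0 < k)%N -> Om N `\` \bigcup_(a in [set: I k]) Q k a `<=` E;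
  dc_g : forall k (a : I k) x j, (0 < k)%N -> Q k a x -> ~ E x -> (0 < j)%N ->
      exists b : I j, Q j b x;
  dc_h : forall k (a : I k) x r, (0 < k)%N -> Q k a x -> ~ E x -> 0 < r ->
      (mu (rball rho x (2 * r) `&` Q k a)
         <= c2%:E * mu (rball rho x r `&` Q k a))%E;
  dc_h_small : forall k (a : I k) x r, (0 < k)%N -> Q k a x -> ~ E x -> 0 < r ->
      r <= delta ^+ k ->
      (c0%:E * mu (rball rho x r) <= mu (rball rho x r `&` Q k a))%E;
  dc_h_large : forall k (a : I k) x r, (0 < k)%N -> Q k a x -> ~ E x ->
      delta ^+ k < r ->
      (c0%:E * mu (Q k a) <= mu (rball rho x r `&` Q k a))%E
}.

From HB Require Import structures.
From mathcomp Require Import all_boot all_order all_algebra.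
From mathcomp Require Import all_classical all_reals all_analysis.
From mathcomp Require Import finmap.
From mathcomp Require Import ring lra.
Import Order.TTheory GRing.Theory Num.Theory.
Local Open Scope classical_set_scope.
Local Open Scope ring_scope.

(* Fix the quasi-triangle constant B of [Om n.+4] and take k so large that every
   radius of order [delta ^+ k] used below is below the relevant [eps m].
   Compactness of the closure of [Om n.+3] shows that there are only finitely
   many distinct cubes of generation k, and by property (f) those meeting
   [Om n] cover it up to the null set E.  For such a cube, F is the union of
   the cubes meeting [B(z, c1 delta^k)]: it covers this ball up to E and, by
   two quasi-triangle steps, lies in a ball of radius [c' delta^k].  F is
   doubling: for [r <= delta^k] by the doubling of mu and the density property
   (h) of the cube containing x; for [r > delta^k] because
   [mu (B(x, r) `&` F)] then dominates [c0] times the measure of that cube,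
   which is bounded below uniformly over the finitely many cubes in F. *)

Lemma scaled_expr_eventually_le (R : realType) (q lam e : R) :
  0 <= q < 1 -> 0 < e -> \forall k \near \oo, lam * q ^+ k <= e.
Proof.
move=> /andP[q0 q1] e0.
have qk0 : (fun k => lam * q ^+ k) @ \oo --> 0.
  rewrite -(mulr0 lam); apply: cvgMl_tmp; apply: cvg_expr.
  by rewrite ger0_norm.
exact: cvgr_le qk0 _ e0.
Qed.

Lemma seq_pos_lower_bound (R : realType) (s : seq (\bar R)) :
  (forall y, y \in s -> (0 < y)%E) ->
  exists2 m : R, 0 < m & forall y, y \in s -> (m%:E <= y)%E.
Proof.
elim: s => [|y s IH] s_gt0; first by exists 1.
have [|m m0 le_m] := IH; first by move=> x xs; apply: s_gt0; rewrite inE xs orbT.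
have y0 : (0 < y)%E by apply: s_gt0; rewrite mem_head.
have y1_fin : Order.min y 1%:E \is a fin_num.
  rewrite ge0_fin_numE; last by rewrite le_min (ltW y0) lee_fin ler01.
  by apply: le_lt_trans (ltry 1); rewrite ge_min lexx orbT.
exists (Order.min m (fine (Order.min y 1%:E))).
  by rewrite lt_min m0 /= -lte_fin fineK // lt_min y0 lte_fin ltr01.
move=> x; rewrite inE => /orP[/eqP ->|xs].
  by rewrite EFin_min fineK // ge_min [X in _ || X]ge_min lexx !orbT.
by rewrite EFin_min ge_min le_m.
Qed.

Lemma finite_pos_lower_bound {R : realType} {J : Type} {A : set J}
    {g : J -> \bar R} :
  finite_set A -> (forall b, A b -> (0 < g b)%E) ->
  exists2 m : R, 0 < m & forall b, A b -> (m%:E <= g b)%E.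
Proof.
move=> /(finite_image g) /finite_fsetP[X gAX] g_gt0.
have [y yX|m m0 le_m] := @seq_pos_lower_bound R X.
  by have : [set` X] y by []; rewrite -gAX => -[b Ab <-]; exact: g_gt0.
exists m => // b Ab; apply: le_m.
by have : [set` X] (g b) by rewrite -gAX; exists b.
Qed.

Lemma finite_partial_choice (X J : Type) (A : set X) (P : X -> J -> Prop) :
  finite_set A -> exists2 B : set J, finite_set B &
    forall x, A x -> (exists a, P x a) -> exists2 a, B a & P x a.
Proof.
move=> finA.
pose pick x : set J := if pselect (exists a, P x a) is left h
  then [set sval (cid h)] else set0.
exists (\bigcup_(x in A) pick x).
  apply: bigcup_finite => // x _; rewrite /pick.
  by case: pselect => h; [exact: finite_set1 | exact: finite_set0].
move=> x Ax ex; exists (sval (cid ex)); last by case: cid.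
exists x => //; rewrite /pick; case: pselect => // h.
by rewrite /= (Prop_irrelevance ex h).
Qed.

(* A cube of generation k has diameter [< c1 delta^k] and is contained in the
   ball of that radius around its center, so if it meets [B(z, c1 delta^k)]
   it lies in [B(z, B (c1 + B (c1 + c1)) delta^k)]. *)
Definition cube_nbhd_radius {R : realType} (B c1 : R) : R := B * (c1 + B * (c1 + c1)).

Lemma cube_nbhd_radius_ge (R : realType) (B c1 : R) :
  1 <= B -> 0 <= c1 -> c1 <= cube_nbhd_radius B c1.
Proof. by rewrite /cube_nbhd_radius => B1 c1_0; nra. Qed.

Lemma rball_le {R : realType} {T : Type} (rho : T -> T -> R) (x : T) (r s : R) :
  r <= s -> rball rho x r `<=` rball rho x s.
Proof. by move=> rs y; rewrite /rball /= => /lt_le_trans; apply. Qed.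

Definition representatives {T J : Type} (Q : J -> set T) (S : set J) : Prop :=
  forall a, exists2 b, S b & Q b = Q a.

Definition cubes_meeting {T J : Type} (Q : J -> set T) (S : set J) (A : set T) :
  set J := [set b | S b /\ Q b `&` A !=set0].

Lemma subset_rho_closure {R : realType} {T : Type} (rho : T -> T -> R)
    {A : set T} : A `<=` rho_closure rho A.
Proof. by move=> x Ax U _ Ux; exists x. Qed.

Section LocallyHomogeneous.
Context {d : measure_display} {T : measurableType d} {R : realType}.
Context {rho : T -> T -> R} {mu : {measure set T -> \bar R}}.
Context {Om : nat -> set T} {eps : nat -> R}.
Hypothesis LH : locally_homogeneous rho mu Om eps.

Lemma rho_open_measurable (A : set T) : rho_open rho A -> measurable A.
Proof. by move=> oA; rewrite (lh_borel LH); exact: sub_sigma_algebra. Qed.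

Lemma rball_measurable (x : T) (r : R) : measurable (rball rho x r).
Proof. exact/rho_open_measurable/(lh_ball_open LH). Qed.

Lemma rho_xx (x : T) : rho x x = 0.
Proof. exact/(lh_rho_eq0 LH). Qed.

Lemma Om_le (m p : nat) : (0 < m)%N -> (m <= p)%N -> Om m `<=` Om p.
Proof.
move=> m0 /subnK <-; elim: (p - m)%N => [|i IH] //.
apply: subset_trans IH (lh_Om_incr LH _); by rewrite addn_gt0 m0 orbT.
Qed.

Lemma Om_succ_of_near (m : nat) (x y : T) :
  (0 < m)%N -> Om m y -> rho x y < eps m -> Om m.+1 x.
Proof.
move=> m0 Omy xy; apply: (lh_eps_nbhd LH m0); exists y; split => //.
by have := lh_eps_pos LH m0; lra.
Qed.

Lemma rball_measure_gt0 (m : nat) (x : T) (r : R) :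
  (0 < m)%N -> Om m x -> 0 < r -> r <= eps m -> (0 < mu (rball rho x r))%E.
Proof.
move=> m0 Omx r0 r_le; have [C [_ HC]] := lh_doubling LH m0.
have [] := HC x (r / 2) Omx; [lra | lra | ].
by have -> : 2 * (r / 2) = r by lra.
Qed.

Lemma rball_measure_lt_pinfty (m : nat) (x : T) (r : R) :
  (0 < m)%N -> Om m x -> 0 < r -> r <= eps m -> (mu (rball rho x r) < +oo)%E.
Proof.
move=> m0 Omx r0 r_le; have [C [_ HC]] := lh_doubling LH m0.
by have [] := HC x r Omx r0 r_le.
Qed.

Lemma le_measure_rballI {A F : set T} {x : T} {r : R} :
  measurable A -> measurable F -> A `<=` F ->
  (mu (rball rho x r `&` A) <= mu (rball rho x r `&` F))%E.
Proof.
move=> mA mF AF; apply: le_measure; last exact: setIS.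
- by apply/mem_set/measurableI => //; exact: rball_measurable.
- by apply/mem_set/measurableI => //; exact: rball_measurable.
Qed.

Section DyadicCubes.
Context {n : nat} {I : nat -> Type} {Q : forall k, I k -> set T}.
Context {z : forall k, I k -> T} {a0 c0 c1 c2 delta : R} {E : set T}.
Hypothesis DC : dyadic_cubes rho mu Om eps n.+1 Q z a0 c0 c1 c2 delta E.
Context {k : nat}.
Hypothesis k0 : (0 < k)%N.

Lemma cube_measurable (a : I k) : measurable (Q k a).
Proof. exact/rho_open_measurable/(dc_open (a := a) DC k0). Qed.

Lemma cube_sub_rball (a : I k) : Q k a `<=` rball rho (z k a) (c1 * delta ^+ k).
Proof.
have [_ clos _] := dc_d DC a k0.
by move=> x Qx; apply: clos; exact: subset_rho_closure.
Qed.

Lemma cube_center_Om (a : I k) : Om n.+3 (z k a).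
Proof.
have [_ _ ball_sub] := dc_d DC a k0; apply: ball_sub.
have [/andP[delta0 _] c1_0] := (dc_delta DC, dc_c1 DC).
by rewrite /rball /= rho_xx mulr_gt0 // exprn_gt0.
Qed.

Lemma cubes_eq_of_meet (a b : I k) (x : T) : Q k a x -> Q k b x -> Q k a = Q k b.
Proof.
move=> Qax Qbx; apply/seteqP; split.
- have [//|disj] := dc_e DC b a k0 (leqnn k).
  by have : (Q k a `&` Q k b) x by []; rewrite disj.
- have [//|disj] := dc_e DC a b k0 (leqnn k).
  by have : (Q k b `&` Q k a) x by []; rewrite disj.
Qed.

(* Compactness of the closure of [Om n.+3] yields finitely many points within
   [a0 * delta ^+ k] of every center; each cube contains the inner ball around
   its center, so cubes with nearby centers coincide. *)
Lemma exists_finite_representatives :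
  exists2 S : set (I k), finite_set S & representatives (Q k) S.
Proof.
have inner0 : 0 < a0 * delta ^+ k.
  by have [/andP[delta0 _] a0_0] := (dc_delta DC, dc_a0 DC); rewrite mulr_gt0 ?exprn_gt0.
have cover_all : rho_closure rho (Om n.+3) `<=`
    \bigcup_x rball rho x (a0 * delta ^+ k).
  by move=> x _; exists x => //; rewrite /rball /= rho_xx.
have [X [finX cover]] := lh_Om_compact LH (isT : (0 < n.+3)%N)
  (fun x => lh_ball_open LH (x := x) (r := a0 * delta ^+ k)) cover_all.
have [S finS pickS] := @finite_partial_choice T (I k) X
  (fun x a => rho x (z k a) < a0 * delta ^+ k) finX.
exists S => // a.
have [x Xx xa] := cover _ (subset_rho_closure rho _ (cube_center_Om a)).
have [b Sb xb] := pickS x Xx (ex_intro _ a xa).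
exists b => //; apply: (cubes_eq_of_meet _ _ x); apply: (dc_a DC) => //;
  by rewrite /rball /= (lh_rho_sym LH).
Qed.

Lemma cubes_meeting_cover {S : set (I k)} {A : set T} :
  representatives (Q k) S -> A `<=` Om n.+1 ->
  mu.-negligible (A `\` \bigcup_(b in cubes_meeting (Q k) S A) Q k b).
Proof.
move=> repS AOm; exists E; split; [exact: dc_E_meas DC | exact: dc_E_null DC |].
move=> y [Ay not_covered]; apply: contrapT => Ey.
have [a _ Qay] : (\bigcup_(a in [set: I k]) Q k a) y.
  by apply: contrapT => nQ; apply: Ey; apply: (dc_f DC k0); split => //; exact: AOm.
have [b Sb Qba] := repS a.
have Qby : Q k b y by rewrite Qba.
by apply: not_covered; exists b => //; split => //; exists y.
Qed.

Lemma cube_measure_gt0 (b : I k) : a0 * delta ^+ k <= eps n.+3 -> (0 < mu (Q k b))%E.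
Proof.
move=> small; have [/andP[delta0 _] a0_0] := (dc_delta DC, dc_a0 DC).
have inner0 : 0 < a0 * delta ^+ k by rewrite mulr_gt0 ?exprn_gt0.
apply: lt_le_trans (rball_measure_gt0 n.+3 _ _ isT (cube_center_Om b) inner0 small) _.
apply: le_measure; last exact: (dc_a DC).
- exact/mem_set/rball_measurable.
- exact/mem_set/cube_measurable.
Qed.

Lemma cube_doubling_small_radius (C : R) (F : set T) (b : I k) (x : T) (r : R) :
  0 <= C ->
  (forall y s, Om n.+3 y -> 0 < s -> s <= eps n.+3 ->
     (mu (rball rho y (2 * s)) <= C%:E * mu (rball rho y s))%E) ->
  delta ^+ k <= eps n.+3 -> measurable F -> Q k b `<=` F ->
  Q k b x -> ~ E x -> 0 < r -> r <= delta ^+ k ->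
  (mu (rball rho x (2 * r) `&` F) <= (C / c0)%:E * mu (rball rho x r `&` F))%E.
Proof.
move=> C0 HC small mF QF Qbx Ex r0 r_le; have c0_0 := dc_c0 DC.
have Ox : Om n.+3 x.
  by apply: (lh_Om_incr LH (isT : (0 < n.+2)%N)); exact: (dc_b DC k0 Qbx).
apply: le_trans (measureIl mu (rball_measurable _ _) mF) _.
apply: le_trans (HC x r Ox r0 (le_trans r_le small)) _.
have -> : (C%:E * mu (rball rho x r) = (C / c0)%:E * (c0%:E * mu (rball rho x r)))%E.
  by rewrite muleA -EFinM divfK // gt_eqF.
apply: lee_wpmul2l; first by rewrite lee_fin divr_ge0 // ltW.
apply: le_trans (dc_h_small DC k0 Qbx Ex r0 r_le) _.
exact: le_measure_rballI (cube_measurable b) mF QF.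
Qed.

Lemma cube_doubling_large_radius (F : set T) (b : I k) (x : T) (r m : R) :
  measurable F -> Q k b `<=` F -> (mu F < +oo)%E ->
  0 < m -> (m%:E <= mu (Q k b))%E -> Q k b x -> ~ E x -> delta ^+ k < r ->
  (mu (rball rho x (2 * r) `&` F)
     <= (fine (mu F) / (c0 * m))%:E * mu (rball rho x r `&` F))%E.
Proof.
move=> mF QF F_fin m0 le_m Qbx Ex r_gt; have c0_0 := dc_c0 DC.
apply: le_trans (measureIr mu (rball_measurable _ _) mF) _.
set M := fine (mu F).
apply: (@le_trans _ _ ((M / (c0 * m))%:E * (c0%:E * m%:E))%E).
  by rewrite -!EFinM divfK ?gt_eqF ?mulr_gt0 // fineK // ge0_fin_numE ?measure_ge0.
apply: lee_wpmul2l.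
  by rewrite lee_fin divr_ge0 ?fine_ge0 ?measure_ge0 // mulr_ge0 // ltW.
apply: le_trans (le_measure_rballI (cube_measurable b) mF QF).
apply: le_trans (dc_h_large DC k0 Qbx Ex r_gt).
by apply: lee_wpmul2l => //; rewrite lee_fin ltW.
Qed.

Lemma cube_union_doubling (S : set (I k)) :
  finite_set S -> delta ^+ k <= eps n.+3 -> a0 * delta ^+ k <= eps n.+3 ->
  (mu (\bigcup_(b in S) Q k b) < +oo)%E ->
  exists c : R, {ae mu, forall x, (\bigcup_(b in S) Q k b) x ->
    forall r : R, 0 < r ->
      (mu (rball rho x (2 * r) `&` \bigcup_(b in S) Q k b)
         <= c%:E * mu (rball rho x r `&` \bigcup_(b in S) Q k b))%E}.
Proof.
set F := \bigcup_(b in S) Q k b => finS small small_inner F_fin.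
have [C [C1 HC]] := lh_doubling LH (isT : (0 < n.+3)%N).
have HC2 y s : Om n.+3 y -> 0 < s -> s <= eps n.+3 ->
    (mu (rball rho y (2 * s)) <= C%:E * mu (rball rho y s))%E.
  by move=> Oy s0 s_le; have [] := HC y s Oy s0 s_le.
have [m m0 le_m] := finite_pos_lower_bound finS
  (fun b _ => cube_measure_gt0 b small_inner).
have mF : measurable F by apply: fin_bigcup_measurable => // b _; exact: cube_measurable.
have c0_0 := dc_c0 DC.
have c_small : 0 <= C / c0 by rewrite divr_ge0 ?ltW // (lt_trans ltr01).
have c_large : 0 <= fine (mu F) / (c0 * m).
  by rewrite divr_ge0 ?fine_ge0 ?measure_ge0 // mulr_ge0 // ltW.
exists (C / c0 + fine (mu F) / (c0 * m)).
exists E; split; [exact: dc_E_meas DC | exact: dc_E_null DC |].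
move=> x /= not_doubling; apply: contrapT => Ex; apply: not_doubling.
move=> [b Sb Qbx] r r0; have QF : Q k b `<=` F by move=> y Qby; exists b.
have ball_ge0 : (0 <= mu (rball rho x r `&` F))%E by exact: measure_ge0.
have [r_le|r_gt] := leP r (delta ^+ k).
- have C0 : 0 <= C by exact: ltW (lt_trans ltr01 C1).
  apply: le_trans
    (cube_doubling_small_radius _ _ _ _ _ C0 HC2 small mF QF Qbx Ex r0 r_le) _.
  by apply: lee_wpmul2r => //; rewrite lee_fin lerDl.
- apply: le_trans
    (cube_doubling_large_radius _ _ _ _ _ mF QF F_fin m0 (le_m b Sb) Qbx Ex r_gt) _.
  by apply: lee_wpmul2r => //; rewrite lee_fin lerDr.
Qed.

Section QuasiTriangle.
Context {B : R}.
Hypothesis B1 : 1 <= B.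
Hypothesis quasi_triangle : forall x y w, Om n.+4 x -> Om n.+4 y -> Om n.+4 w ->
  rho x y <= B * (rho x w + rho w y).
Local Notation c' := (cube_nbhd_radius B c1).

Lemma cube_meeting_rball_sub (a b : I k) :
  Q k b `&` rball rho (z k a) (c1 * delta ^+ k) !=set0 ->
  Q k b `<=` rball rho (z k a) (c' * delta ^+ k).
Proof.
move=> [v [Qbv av]] y Qby.
have [_ _ ball_sub] := dc_d DC a k0.
have Om3 : Om n.+3 `<=` Om n.+4 := Om_le n.+3 n.+4 isT (leqnSn _).
have Ov := Om3 _ (ball_sub _ av).
have Oy := Om3 _ (lh_Om_incr LH (isT : (0 < n.+2)%N) (dc_b DC k0 Qby)).
have Oza := Om3 _ (cube_center_Om a).
have Ozb := Om3 _ (cube_center_Om b).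
have vy := quasi_triangle _ _ _ Ov Oy Ozb.
have ay := quasi_triangle _ _ _ Oza Oy Ov.
have bv := cube_sub_rball _ _ Qbv; have by_ := cube_sub_rball _ _ Qby.
rewrite /rball /= in av bv by_ *; rewrite (lh_rho_sym LH v (z k b)) in vy.
have B0 : 0 < B := lt_le_trans ltr01 B1.
set e := c1 * delta ^+ k in av bv by_ *.
have vy' : rho v y < B * (e + e) by apply: le_lt_trans vy _; rewrite ltr_pM2l //; lra.
have -> : c' * delta ^+ k = B * (e + B * (e + e)) by rewrite /e /cube_nbhd_radius; ring.
by apply: le_lt_trans ay _; rewrite ltr_pM2l //; lra.
Qed.

Hypothesis n0 : (0 < n)%N.
Hypothesis small_doubling : delta ^+ k <= eps n.+3.
Hypothesis small_inner : a0 * delta ^+ k <= eps n.+3.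
Hypothesis small_outer : c' * delta ^+ k <= eps n.+3.
Hypothesis small_Om : B * (c1 + c') * delta ^+ k <= eps n.

Lemma cube_nbhd_sub_Om (a : I k) (w : T) : Q k a w -> Om n w ->
  rball rho (z k a) (c' * delta ^+ k) `<=` Om n.+1.
Proof.
move=> Qaw Onw y ay; rewrite /rball /= in ay.
have Oz := cube_center_Om a.
have Oy : Om n.+4 y.
  apply: (Om_succ_of_near n.+3 y _ isT Oz).
  by rewrite (lh_rho_sym LH); exact: lt_le_trans ay small_outer.
apply: (Om_succ_of_near n y w n0 Onw).
have := quasi_triangle _ _ _ Oy
  (Om_le n n.+4 n0 (leq_addl 4 n) _ Onw)
  (Om_le n.+3 n.+4 isT (leqnSn _) _ Oz).
rewrite (lh_rho_sym LH y (z k a)) => yw.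
have aw := cube_sub_rball _ _ Qaw; rewrite /rball /= in aw.
apply: le_lt_trans yw (lt_le_trans _ small_Om).
have -> : B * (c1 + c') * delta ^+ k = B * (c' * delta ^+ k + c1 * delta ^+ k) by ring.
by rewrite ltr_pM2l ?(lt_le_trans ltr01 B1) //; lra.
Qed.

Lemma cube_nbhd_union (S : set (I k)) (a : I k) (w : T) :
  finite_set S -> representatives (Q k) S -> Q k a w -> Om n w ->
  exists S' : set (I k), exists F : set T,
    [/\ finite_set S', F = \bigcup_(b in S') Q k b,
        mu.-negligible (rball rho (z k a) (c1 * delta ^+ k) `\` F),
        (F `<=` rball rho (z k a) (c' * delta ^+ k) /\
         rball rho (z k a) (c' * delta ^+ k) `<=` Om n.+1) &
        exists c : R,
          {ae mu, forall x, F x -> forall r : R, 0 < r ->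
            (mu (rball rho x (2 * r) `&` F) <= c%:E * mu (rball rho x r `&` F))%E}].
Proof.
move=> finS repS Qaw Onw; have c1_0 := dc_c1 DC.
have /andP[delta0 _] := dc_delta DC; have dk0 : 0 < delta ^+ k by rewrite exprn_gt0.
have c1_le : c1 <= c' by rewrite cube_nbhd_radius_ge // ltW.
have nbhd_Om := cube_nbhd_sub_Om _ _ Qaw Onw.
set S' := cubes_meeting (Q k) S (rball rho (z k a) (c1 * delta ^+ k)).
have F_sub : \bigcup_(b in S') Q k b `<=` rball rho (z k a) (c' * delta ^+ k).
  by move=> y [b [_ meet] Qby]; exact: (cube_meeting_rball_sub a b meet _ Qby).
have finS' : finite_set S' by apply: sub_finite_set finS => b [].
exists S', (\bigcup_(b in S') Q k b); split => //.
  apply: (cubes_meeting_cover repS); apply: subset_trans nbhd_Om.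
  by apply: rball_le; rewrite ler_wpM2r // ltW.
apply: cube_union_doubling => //.
have mF : measurable (\bigcup_(b in S') Q k b).
  by apply: fin_bigcup_measurable => // b _; exact: cube_measurable.
apply: le_lt_trans (le_measure mu (mem_set mF) (mem_set (rball_measurable _ _)) F_sub) _.
apply: (rball_measure_lt_pinfty n.+3 _ _ isT (cube_center_Om a)) => //.
by rewrite mulr_gt0 // (lt_le_trans c1_0).
Qed.

End QuasiTriangle.

End DyadicCubes.

End LocallyHomogeneous.

Theorem mainTheorem4 (d : measure_display) (T : measurableType d)
    (R : realType) (rho : T -> T -> R) (mu : {measure set T -> \bar R})
    (Om : nat -> set T) (eps : nat -> R) (n : nat)
    (I : nat -> Type) (Q : forall k, I k -> set T) (z : forall k, I k -> T)
    (a0 c0 c1 c2 delta : R) (E : set T) :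
  locally_homogeneous rho mu Om eps ->
  (0 < n)%N ->
  dyadic_cubes rho mu Om eps n.+1 Q z a0 c0 c1 c2 delta E ->
  exists c' : R, exists K : nat, forall k : nat, (K <= k)%N -> (0 < k)%N ->
    exists S : set (I k),
      [/\ finite_set S,
          mu.-negligible (Om n `\` \bigcup_(a in S) Q k a) &
          forall a, S a ->
            [/\ Q k a `<=` rball rho (z k a) (c1 * delta ^+ k),
                rball rho (z k a) (c1 * delta ^+ k) `<=` Om n.+1 &
                exists S' : set (I k), exists F : set T,
                  [/\ finite_set S', F = \bigcup_(b in S') Q k b,
                      mu.-negligible (rball rho (z k a) (c1 * delta ^+ k) `\` F),
                      (F `<=` rball rho (z k a) (c' * delta ^+ k) /\
                       rball rho (z k a) (c' * delta ^+ k) `<=` Om n.+1) &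
                      exists c : R,
                        {ae mu, forall x, F x -> forall r : R, 0 < r ->
                          (mu (rball rho x (2 * r) `&` F)
                             <= c%:E * mu (rball rho x r `&` F))%E}]]].
Proof.
move=> LH n0 DC.
have [B [B1 quasi_triangle]] := lh_quasi_triangle LH (isT : (0 < n.+4)%N).
set c' := cube_nbhd_radius B c1.
have c1_0 := dc_c1 DC; have /andP[delta0 delta1] := dc_delta DC.
have [eps3 epsn] := (lh_eps_pos LH (isT : (0 < n.+3)%N), lh_eps_pos LH n0).
have [K _ small] : \forall k \near \oo, [/\ 1 * delta ^+ k <= eps n.+3,
    a0 * delta ^+ k <= eps n.+3, c' * delta ^+ k <= eps n.+3 &
    B * (c1 + c') * delta ^+ k <= eps n].
  by near=> k; split; near: k; apply: scaled_expr_eventually_le; rewrite ?ltW ?delta1.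
exists c', K => k /small[]; rewrite mul1r.
move=> small_doubling small_inner small_out small_in k0.
have [S finS repS] := exists_finite_representatives LH DC k0.
have cube_nbhd a w := cube_nbhd_union LH DC k0 B1 quasi_triangle n0
  small_doubling small_inner small_out small_in _ a w finS repS.
exists (cubes_meeting (Q k) S (Om n)); split.
- by apply: sub_finite_set finS => a [].
- by apply: (cubes_meeting_cover DC k0 repS); exact: (lh_Om_incr LH n0).
move=> a [_ [w [Qaw Onw]]].
have [_ [_ [_ _ _ [_ nbhd_Om] _]]] := cube_nbhd a w Qaw Onw.
split; [exact: (cube_sub_rball DC k0 a) | | exact: (cube_nbhd a w Qaw Onw)].
apply: subset_trans nbhd_Om; apply: rball_le.
by rewrite ler_wpM2r ?exprn_ge0 ?(ltW delta0) ?cube_nbhd_radius_ge ?(ltW c1_0).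
Unshelve. all: by end_near.
Qed.
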